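(* Let $V$ be a space which is not CM. Then $V$ has only finitely many rational angles.
   Context: A space is a $2$-dimensional $\mathbb{Q}$-vector subspace $V\subset\mathbb{C}$ containing two $\mathbb{R}$-linearly independent vectors. $V$ is CM if there is $\lambda\in\mathbb{C}\setminus\mathbb{Q}$ with $\lambda V\subseteq V$. A rational angle of $V$ is an ordered pair of distinct lines through $0$, $(\mathbb{R}v_1,\mathbb{R}v_2)$ with $v_1,v_2\in V\setminus\{0\}$, $v_2/v_1\notin\mathbb{R}$, such that $\arg(v_2/v_1)$ is a rational multiple of $\pi$. *)

From Stdlib Require Import Reals List QArith.
From Coquelicot Require Import Coquelicot.
Open Scope C_scope.

Definition is_rat (x : R) : Prop := exists q : Q, x = Q2R q.

Definition is_Q_subspace (V : C -> Prop) : Prop :=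
  V 0 /\ (forall u v, V u -> V v -> V (u + v)) /\
  (forall (a : R) u, is_rat a -> V u -> V (RtoC a * u)).

Definition Q_dim2 (V : C -> Prop) : Prop :=
  exists w1 w2 : C, V w1 /\ V w2 /\
    (forall a b : R, is_rat a -> is_rat b ->
       RtoC a * w1 + RtoC b * w2 = 0 -> a = 0%R /\ b = 0%R) /\
    (forall v, V v -> exists a b : R, is_rat a /\ is_rat b /\
       v = RtoC a * w1 + RtoC b * w2).

Definition R_indep (u v : C) : Prop :=
  forall a b : R, RtoC a * u + RtoC b * v = 0 -> a = 0%R /\ b = 0%R.

Definition is_space (V : C -> Prop) : Prop :=
  is_Q_subspace V /\ Q_dim2 V /\
  exists u v, V u /\ V v /\ R_indep u v.

Definition is_CM (V : C -> Prop) : Prop :=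
  exists lam : C, ~ (exists q : R, is_rat q /\ lam = RtoC q) /\
    forall v, V v -> V (lam * v).

Definition line (v : C) : C -> Prop := fun z => exists r : R, z = RtoC r * v.

Definition arg_rat_pi (z : C) : Prop :=
  exists q : R, is_rat q /\ z = RtoC (Cmod z) * (cos (q * PI), sin (q * PI)).

Definition rational_angle (V : C -> Prop) (A : (C -> Prop) * (C -> Prop)) : Prop :=
  exists v1 v2 : C, V v1 /\ V v2 /\ v1 <> 0 /\ v2 <> 0 /\
    fst A = line v1 /\ snd A = line v2 /\ fst A <> snd A /\
    Im (v2 / v1) <> 0%R /\ arg_rat_pi (v2 / v1).

Definition finitely_many {T : Type} (P : T -> Prop) : Prop :=
  exists l : list T, forall x, P x -> In x l.

(** Fix a Q-basis [w1, w2] of [V]. For [v1, v2] in [V] the cotangent of the angle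
    from [v1] to [v2] is [dot v1 v2 / cross v1 v2], and expanding [v1, v2] in the
    basis puts it in the Q-span of the three numbers [gram w1 w2].

    A finitely generated Q-space of reals contains only finitely many cotangents
    [cot (q PI)] with [q] rational: it is spanned by finitely many of them, which
    all lie in [Q(eta)] for [eta = exp (2 i PI / N)] and a common [N]. Hence every
    [cot (q PI)] in it makes [z = exp (2 i PI q)] a root of unity of degree at most
    [N] over [Q], so [totient (order z) <= N] and [z] is a [(2 N)!]-th root of unity.

    Finally, an angle with cotangent [t] has second line [(t + i)] times its first
    line. Three such angles with distinct first lines would make [lam = s (t + i)],
    for a suitable real [s], satisfy [lam V ⊆ V], i.e. [V] would be CM; so each
    cotangent carries at most two rational angles. *)

From Stdlib Require Import Reals List QArith Qreals Lra Lia ZArith Classical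
  FunctionalExtensionality PropExtensionality.
From Coquelicot Require Import Coquelicot.

Local Open Scope R_scope.

(** * Q-spans of real numbers *)

Lemma is_rat_0 : is_rat 0.
Proof. exists 0%Q; unfold Q2R; simpl; lra. Qed.

Lemma is_rat_1 : is_rat 1.
Proof. exists 1%Q; unfold Q2R; simpl; lra. Qed.

Lemma is_rat_plus a b : is_rat a -> is_rat b -> is_rat (a + b).
Proof. intros [p ->] [q ->]; exists (p + q)%Q; now rewrite Q2R_plus. Qed.

Lemma is_rat_mult a b : is_rat a -> is_rat b -> is_rat (a * b).
Proof. intros [p ->] [q ->]; exists (p * q)%Q; now rewrite Q2R_mult. Qed.

Lemma is_rat_opp a : is_rat a -> is_rat (- a).
Proof. intros [p ->]; exists (- p)%Q; now rewrite Q2R_opp. Qed.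

Lemma is_rat_minus a b : is_rat a -> is_rat b -> is_rat (a - b).
Proof. intros; apply is_rat_plus; auto; now apply is_rat_opp. Qed.

Lemma is_rat_inv a : is_rat a -> is_rat (/ a).
Proof.
intros [p ->]. destruct (Qeq_dec p 0) as [E|E].
- exists 0%Q. rewrite (Qeq_eqR _ _ E). unfold Q2R; simpl. rewrite Rmult_0_l, Rinv_0. lra.
- exists (/ p)%Q. now rewrite Q2R_inv.
Qed.

Lemma is_rat_div a b : is_rat a -> is_rat b -> is_rat (a / b).
Proof. intros; apply is_rat_mult; auto; now apply is_rat_inv. Qed.

Definition Q_closed (S : R -> Prop) : Prop :=
  S 0 /\ (forall x y, S x -> S y -> S (x + y)) /\
  (forall a x, is_rat a -> S x -> S (a * x)).

Definition qspan (L : list R) (t : R) : Prop :=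
  forall S, Q_closed S -> (forall x, In x L -> S x) -> S t.

Lemma qspan_Q_closed L : Q_closed (qspan L).
Proof.
split; [|split].
- intros S HS _; exact (proj1 HS).
- intros x y Hx Hy S HS HL. exact (proj1 (proj2 HS) _ _ (Hx S HS HL) (Hy S HS HL)).
- intros a x Ha Hx S HS HL. exact (proj2 (proj2 HS) _ _ Ha (Hx S HS HL)).
Qed.

Lemma qspan_0 L : qspan L 0.
Proof. apply (proj1 (qspan_Q_closed L)). Qed.

Lemma qspan_add L x y : qspan L x -> qspan L y -> qspan L (x + y).
Proof. apply (proj1 (proj2 (qspan_Q_closed L))). Qed.

Lemma qspan_scal L a x : is_rat a -> qspan L x -> qspan L (a * x).
Proof. apply (proj2 (proj2 (qspan_Q_closed L))). Qed.

Lemma qspan_in L x : In x L -> qspan L x.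
Proof. intros H S _ HL; auto. Qed.

Lemma qspan_trans L1 L2 t :
  (forall x, In x L1 -> qspan L2 x) -> qspan L1 t -> qspan L2 t.
Proof. intros H Ht. apply Ht; [apply qspan_Q_closed|exact H]. Qed.

Lemma qspan_nil t : qspan nil t -> t = 0.
Proof.
intros H; apply (H (fun x => x = 0)); [|intros x []].
split; [reflexivity|split].
- intros x y -> ->; lra.
- intros a x _ ->; lra.
Qed.

Lemma qspan_cons h0 h t : qspan (h0 :: h) t ->
  exists a y, is_rat a /\ qspan h y /\ t = a * h0 + y.
Proof.
intros H; apply H.
- split; [|split].
  + exists 0, 0; split; [apply is_rat_0|split; [apply qspan_0|lra]].
  + intros x y [a [u [Ha [Hu ->]]]] [b [v [Hb [Hv ->]]]].
    exists (a + b), (u + v).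
    split; [now apply is_rat_plus|split; [now apply qspan_add|lra]].
  + intros c x Hc [a [u [Ha [Hu ->]]]].
    exists (c * a), (c * u).
    split; [now apply is_rat_mult|split; [now apply qspan_scal|lra]].
- intros x [<-|Hx].
  + exists 1, 0; split; [apply is_rat_1|split; [apply qspan_0|lra]].
  + exists 0, x; split; [apply is_rat_0|split; [now apply qspan_in|lra]].
Qed.

Lemma qspan_lift_translates (T T' : R -> Prop) t0 :
  (forall x, T' x -> exists b, is_rat b /\ T (x + b * t0)) ->
  forall L', (forall x, In x L' -> T' x) ->
  exists L, (forall x, In x L -> T x) /\ forall x, In x L' -> qspan (t0 :: L) x.
Proof.
intros HT; induction L' as [|x L1 IH]; intros HL.
- exists nil; split; intros _ [].
- destruct IH as [L [H1 H2]]; [intros; apply HL; now right|].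
  destruct (HT x (HL x (or_introl eq_refl))) as [b [Hb Hxb]].
  exists ((x + b * t0) :: L); split.
  + intros y [<-|Hy]; auto.
  + intros y [<-|Hy].
    * set (u := x + b * t0). replace x with (u + (- b) * t0) by (unfold u; lra).
      apply qspan_add; [apply qspan_in; right; now left|].
      apply qspan_scal; [now apply is_rat_opp|apply qspan_in; now left].
    * apply qspan_trans with (t0 :: L); [|now apply H2].
      intros z [<-|Hz]; apply qspan_in; [now left|right; now right].
Qed.

(* Induction on [h0 :: h]: unless [T] already lies in [qspan h], pick [t0] in [T]
   with a nonzero [h0]-coordinate and recurse on the translates of [T] into
   [qspan h] along [t0]. *)
Lemma qspan_spanned_by_members (h : list R) (T : R -> Prop) :
  (forall t, T t -> qspan h t) ->
  exists L, (forall x, In x L -> T x) /\ forall t, T t -> qspan L t.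
Proof.
revert T; induction h as [|h0 h IH]; intros T HT.
- exists nil; split; [intros _ []|].
  intros t Ht. rewrite (qspan_nil t (HT t Ht)). apply qspan_0.
- destruct (classic (forall t, T t -> qspan h t)) as [Hall|Hnot]; [now apply IH|].
  apply not_all_ex_not in Hnot. destruct Hnot as [t0 Ht0].
  apply imply_to_and in Ht0. destruct Ht0 as [Tt0 Nt0].
  destruct (qspan_cons h0 h t0 (HT t0 Tt0)) as [a [y [Ha [Hy E0]]]].
  assert (a0 : a <> 0).
  { intros ->. apply Nt0. replace t0 with y by lra. exact Hy. }
  set (T' := fun x => qspan h x /\ exists b, is_rat b /\ T (x + b * t0)).
  destruct (IH T') as [L' [HL'1 HL'2]]; [intros x [Hx _]; exact Hx|].
  destruct (qspan_lift_translates T T' t0) with L' as [L [H1 H2]];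
    [intros x [_ Hx]; exact Hx|exact HL'1|].
  exists (t0 :: L); split; [intros x [<-|Hx]; auto|].
  intros t Tt.
  destruct (qspan_cons h0 h t (HT t Tt)) as [c [y' [Hc [Hy' Et]]]].
  set (x := t - (c / a) * t0).
  assert (T'x : T' x).
  { split.
    - replace x with (y' + (- (c / a)) * y) by (unfold x; rewrite Et, E0; field; auto).
      apply qspan_add; auto. apply qspan_scal; auto.
      now apply is_rat_opp, is_rat_div.
    - exists (c / a); split; [now apply is_rat_div|].
      replace (x + c / a * t0) with t by (unfold x; ring). exact Tt. }
  replace t with (x + (c / a) * t0) by (unfold x; ring).
  apply qspan_add.
  + apply qspan_trans with L'; [exact H2|apply HL'2; exact T'x].
  + apply qspan_scal; [now apply is_rat_div|apply qspan_in; now left].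
Qed.

Lemma finitely_many_sub {T : Type} (P Q : T -> Prop) :
  (forall x, P x -> Q x) -> finitely_many Q -> finitely_many P.
Proof. intros H [l Hl]; exists l; auto. Qed.

Lemma finitely_many_union {A T : Type} (l : list A) (P : A -> T -> Prop) :
  (forall a, In a l -> finitely_many (P a)) ->
  finitely_many (fun x => exists a, In a l /\ P a x).
Proof.
induction l as [|a l IH]; intros H.
- exists nil. intros x [a [[] _]].
- destruct (H a (or_introl eq_refl)) as [l1 H1].
  destruct IH as [l2 H2]; [intros b Hb; apply H; right; auto|].
  exists (l1 ++ l2). intros x [b [[<-|Hb] Hx]]; apply in_or_app; [left; auto|right].
  apply H2; exists b; auto.
Qed.

Lemma finitely_many_of_no_three {T : Type} (P : T -> Prop) :
  (forall x y z, P x -> P y -> P z -> x = y \/ x = z \/ y = z) -> finitely_many P.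
Proof.
intros H.
destruct (classic (exists x, P x)) as [[x Px]|Hno].
- destruct (classic (exists y, P y /\ y <> x)) as [[y [Py Nyx]]|Hno2].
  + exists (x :: y :: nil). intros z Pz.
    destruct (H x y z Px Py Pz) as [E|[E|E]]; [exfalso; auto|left; auto|right; left; auto].
  + exists (x :: nil). intros z Pz. left.
    destruct (classic (z = x)) as [E|E]; [auto|exfalso; apply Hno2; exists z; auto].
- exists nil. intros z Pz. exfalso; apply Hno; exists z; auto.
Qed.

(** * Angles in a space *)

(* [dot p q + i cross p q = conj p * q], so [dot p q / cross p q] is the
   cotangent of the angle from [p] to [q]. *)
Definition cross (p q : C) : R := fst p * snd q - snd p * fst q.
Definition dot (p q : C) : R := fst p * fst q + snd p * snd q.

Definition gram (w1 w2 : C) : list R :=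
  dot w1 w1 / cross w1 w2 :: dot w1 w2 / cross w1 w2 :: dot w2 w2 / cross w1 w2 :: nil.

Definition Q_generated (w1 w2 : C) (V : C -> Prop) : Prop :=
  forall v, V v -> exists a b, is_rat a /\ is_rat b /\ v = (RtoC a * w1 + RtoC b * w2)%C.

Ltac Ceq := apply injective_projections; simpl.

Lemma R_indep_of_cross p q : cross p q <> 0 -> R_indep p q.
Proof.
unfold cross, R_indep; intros H a b E.
destruct p as [p1 p2], q as [q1 q2]; simpl in H.
assert (E1 : a * p1 + b * q1 = 0) by (apply (f_equal fst) in E; simpl in E; lra).
assert (E2 : a * p2 + b * q2 = 0) by (apply (f_equal snd) in E; simpl in E; lra).
assert (Ha : a * (p1 * q2 - p2 * q1) = 0).
{ replace (a * (p1 * q2 - p2 * q1))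
    with (q2 * (a * p1 + b * q1) - q1 * (a * p2 + b * q2)) by ring.
  rewrite E1, E2; ring. }
assert (Hb : b * (p1 * q2 - p2 * q1) = 0).
{ replace (b * (p1 * q2 - p2 * q1))
    with (p1 * (a * p2 + b * q2) - p2 * (a * p1 + b * q1)) by ring.
  rewrite E1, E2; ring. }
split.
- destruct (Rmult_integral _ _ Ha); [auto|contradiction].
- destruct (Rmult_integral _ _ Hb); [auto|contradiction].
Qed.

Lemma cross_comb a b c d (w1 w2 : C) :
  cross (RtoC a * w1 + RtoC b * w2)%C (RtoC c * w1 + RtoC d * w2)%C =
  (a * d - b * c) * cross w1 w2.
Proof. destruct w1, w2; unfold cross; simpl; ring. Qed.

Lemma dot_comb a b c d (w1 w2 : C) :
  dot (RtoC a * w1 + RtoC b * w2)%C (RtoC c * w1 + RtoC d * w2)%C =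
  a * c * dot w1 w1 + (a * d + b * c) * dot w1 w2 + b * d * dot w2 w2.
Proof. destruct w1, w2; unfold dot; simpl; ring. Qed.

Lemma dot_self_neq0 (u : C) : u <> 0%C -> dot u u <> 0.
Proof.
intros Hu H; apply Hu; destruct u as [u1 u2]; unfold dot in H; simpl in H.
assert (u1 = 0) by nra. assert (u2 = 0) by nra. subst. reflexivity.
Qed.

Lemma line_scale k (u : C) : k <> 0 -> line (RtoC k * u)%C = line u.
Proof.
intros Hk; unfold line; apply functional_extensionality; intro z;
apply propositional_extensionality; split; intros [r ->].
- exists (r * k); destruct u; Ceq; ring.
- exists (r / k); destruct u; Ceq; field; auto.
Qed.

Lemma line_eq_of_cross0 (u v : C) : u <> 0%C -> v <> 0%C -> cross u v = 0 ->
  line v = line u.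
Proof.
intros Hu Hv Hc.
assert (Hn := dot_self_neq0 u Hu).
set (k := dot u v / dot u u).
assert (E : v = (RtoC k * u)%C).
{ unfold k, dot, cross in *; destruct u as [u1 u2], v as [v1 v2]; simpl in *.
  assert (H1 : (u1*v1 + u2*v2)*u1 = v1*(u1*u1+u2*u2) + u2*(u1*v2 - u2*v1)) by ring.
  assert (H2 : (u1*v1 + u2*v2)*u2 = v2*(u1*u1+u2*u2) - u1*(u1*v2 - u2*v1)) by ring.
  rewrite Hc, Rmult_0_r in H1, H2.
  Ceq.
  - replace v1 with ((u1*v1 + u2*v2)*u1 / (u1*u1+u2*u2)) at 1 by (rewrite H1; field; auto).
    field; auto.
  - replace v2 with ((u1*v1 + u2*v2)*u2 / (u1*u1+u2*u2)) at 1 by (rewrite H2; field; auto).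
    field; auto. }
rewrite E; apply line_scale.
intros Hk; apply Hv; rewrite E, Hk; destruct u; Ceq; ring.
Qed.

Lemma line_eq_scale (u v : C) : line u = line v -> exists r, u = (RtoC r * v)%C.
Proof.
intros E. assert (H : line u u) by (exists 1; destruct u; Ceq; ring).
rewrite E in H. exact H.
Qed.

Lemma Q_subspace_comb V a b x y : is_Q_subspace V -> is_rat a -> is_rat b ->
  V x -> V y -> V (RtoC a * x + RtoC b * y)%C.
Proof. intros [_ [HA HS]] Ha Hb Hx Hy. apply HA; apply HS; auto. Qed.

Lemma coords_unique (p q : C) X Y X' Y' : cross p q <> 0 ->
  (RtoC X * p + RtoC Y * q = RtoC X' * p + RtoC Y' * q)%C -> X = X' /\ Y = Y'.
Proof.
intros Hc E.
destruct (R_indep_of_cross p q Hc (X - X') (Y - Y')) as [E1 E2]; [|split; lra].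
destruct p, q; apply (f_equal fst) in E as Ef; apply (f_equal snd) in E as Es;
  simpl in *; Ceq; lra.
Qed.

Lemma Q_generated_of_cross V (w1 w2 p q : C) : Q_generated w1 w2 V ->
  V p -> V q -> cross p q <> 0 -> Q_generated p q V.
Proof.
intros Hgen Hp Hq Hc v Hv.
destruct (Hgen p Hp) as [a [b [Ha [Hb Ep]]]].
destruct (Hgen q Hq) as [c [d [Hc' [Hd Eq]]]].
destruct (Hgen v Hv) as [e [f [He [Hf Ev]]]].
rewrite Ep, Eq, cross_comb in Hc.
assert (HD : a * d - b * c <> 0) by (intro E; apply Hc; rewrite E; ring).
assert (HK : cross w1 w2 <> 0) by (intro E; apply Hc; rewrite E; ring).
exists ((e * d - c * f) / (a * d - b * c)), ((a * f - b * e) / (a * d - b * c)).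
split; [|split].
- apply is_rat_div; apply is_rat_minus; apply is_rat_mult; auto.
- apply is_rat_div; apply is_rat_minus; apply is_rat_mult; auto.
- subst; destruct w1, w2; Ceq; field; auto.
Qed.

(* Equivalent to [t = cot (q * PI)], since [sin] and [cos] never vanish together. *)
Definition rat_cot (t : R) : Prop :=
  exists q, is_rat q /\ t * sin (q * PI) = cos (q * PI).

Lemma rat_cot_of_arg_rat_pi (v1 v2 : C) : v1 <> 0%C ->
  Im (v2 / v1) <> 0 -> arg_rat_pi (v2 / v1) ->
  cross v1 v2 <> 0 /\ rat_cot (dot v1 v2 / cross v1 v2).
Proof.
intros H0 HI [q [Hq E]].
assert (Hn := dot_self_neq0 v1 H0).
assert (Ei : Im (v2 / v1) = cross v1 v2 / dot v1 v1).
{ destruct v1, v2; unfold cross, dot in *; simpl in *.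
  unfold Cdiv, Cinv, Cmult, Im; simpl; field; auto. }
assert (Er : Re (v2 / v1) = dot v1 v2 / dot v1 v1).
{ destruct v1, v2; unfold dot in *; simpl in *.
  unfold Cdiv, Cinv, Cmult, Re; simpl; field; auto. }
set (w := (v2 / v1)%C) in *.
assert (E1 : Re w = Cmod w * cos (q * PI)) by (rewrite E at 1; unfold Re; simpl; ring).
assert (E2 : Im w = Cmod w * sin (q * PI)) by (rewrite E at 1; unfold Im; simpl; ring).
assert (Hc : cross v1 v2 <> 0) by (intro Hc; apply HI; rewrite Ei, Hc; unfold Rdiv; ring).
split; [exact Hc|exists q; split; [exact Hq|]].
assert (Hd : dot v1 v2 = dot v1 v1 * (Cmod w * cos (q * PI)))
  by (rewrite <- E1, Er; field; auto).
assert (Hc' : cross v1 v2 = dot v1 v1 * (Cmod w * sin (q * PI)))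
  by (rewrite <- E2, Ei; field; auto).
assert (Hs : Cmod w * sin (q * PI) <> 0) by (rewrite <- E2; auto).
rewrite Hd, Hc'. field.
repeat split; auto; intro Z; apply Hs; rewrite Z; ring.
Qed.

Lemma cot_in_qspan_gram (w1 w2 v1 v2 : C) a b c d :
  v1 = (RtoC a * w1 + RtoC b * w2)%C -> v2 = (RtoC c * w1 + RtoC d * w2)%C ->
  is_rat a -> is_rat b -> is_rat c -> is_rat d -> cross v1 v2 <> 0 ->
  qspan (gram w1 w2) (dot v1 v2 / cross v1 v2).
Proof.
intros E1 E2 Ha Hb Hc Hd Hx.
rewrite E1, E2, cross_comb in Hx.
assert (HD : a * d - b * c <> 0) by (intro E; apply Hx; rewrite E; ring).
assert (HK : cross w1 w2 <> 0) by (intro E; apply Hx; rewrite E; ring).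
rewrite E1, E2, cross_comb, dot_comb.
replace ((a * c * dot w1 w1 + (a * d + b * c) * dot w1 w2 + b * d * dot w2 w2) /
   ((a * d - b * c) * cross w1 w2)) with
  ((a * c / (a * d - b * c)) * (dot w1 w1 / cross w1 w2) +
   ((a * d + b * c) / (a * d - b * c)) * (dot w1 w2 / cross w1 w2) +
   (b * d / (a * d - b * c)) * (dot w2 w2 / cross w1 w2)) by (field; auto).
assert (HD' : is_rat (a * d - b * c)) by (apply is_rat_minus; apply is_rat_mult; auto).
repeat apply qspan_add; apply qspan_scal;
  try (apply is_rat_div; [|exact HD']);
  try (apply is_rat_plus); try (apply is_rat_mult); auto;
  try (apply is_rat_mult; auto);
  apply qspan_in; simpl; auto.
Qed.

(* [(t, 1)] is [t + i], whose argument is the angle with cotangent [t]. *)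
Definition angle_with_cot (V : C -> Prop) (t : R) (A : (C -> Prop) * (C -> Prop)) : Prop :=
  exists u1 u2 s, V u1 /\ V u2 /\ u1 <> 0%C /\ s <> 0 /\
    u2 = (RtoC s * ((t, 1) * u1))%C /\ A = (line u1, line u2).

Lemma rational_angle_with_cot V w1 w2 A : Q_generated w1 w2 V ->
  rational_angle V A ->
  exists t, qspan (gram w1 w2) t /\ rat_cot t /\ angle_with_cot V t A.
Proof.
intros Hgen [v1 [v2 [V1 [V2 [N1 [N2 [F1 [F2 [_ [HI Harg]]]]]]]]]].
destruct (rat_cot_of_arg_rat_pi v1 v2 N1 HI Harg) as [Hc Hcot].
exists (dot v1 v2 / cross v1 v2); split; [|split; [exact Hcot|]].
- destruct (Hgen v1 V1) as [a [b [Ha [Hb E1]]]], (Hgen v2 V2) as [c [d [Hc' [Hd E2]]]].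
  now apply (cot_in_qspan_gram w1 w2 v1 v2 a b c d).
- assert (Hn := dot_self_neq0 v1 N1).
  exists v1, v2, (cross v1 v2 / dot v1 v1).
  repeat split; auto.
  + unfold Rdiv; intro Z; apply Rmult_integral in Z; destruct Z as [Z|Z]; auto.
    now apply (Rinv_neq_0_compat _ Hn).
  + destruct v1 as [a b], v2 as [c d]; unfold cross, dot in *; simpl in *.
    Ceq; field; auto.
  + destruct A; simpl in *; subst; auto.
Qed.

Lemma angle_with_cot_fst_inj V t A A' :
  angle_with_cot V t A -> angle_with_cot V t A' -> fst A = fst A' -> A = A'.
Proof.
intros [u1 [u2 [s [_ [_ [H1 [Hs [E2 EA]]]]]]]]
  [u1' [u2' [s' [_ [_ [H1' [Hs' [E2' EA']]]]]]]] H.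
subst A A'; simpl in H.
destruct (line_eq_scale u1 u1' H) as [r Er].
assert (Hr : r <> 0) by (intro Z; apply H1; rewrite Er, Z; destruct u1'; Ceq; ring).
assert (E : u2 = (RtoC (s * r / s') * u2')%C)
  by (subst u2 u2' u1; destruct u1'; Ceq; field; auto).
rewrite H, E, line_scale; auto.
unfold Rdiv; intro Z. apply Rmult_integral in Z; destruct Z as [Z|Z].
- apply Rmult_integral in Z; destruct Z; auto.
- now apply (Rinv_neq_0_compat _ Hs').
Qed.

Lemma is_CM_of_generators V p q lam : is_Q_subspace V -> Q_generated p q V ->
  V (lam * p)%C -> V (lam * q)%C -> Im lam <> 0 -> is_CM V.
Proof.
intros HQ Hgen Hp Hq Hlam. exists lam; split.
- intros [r [_ ->]]. apply Hlam; reflexivity.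
- intros v Hv. destruct (Hgen v Hv) as [a [b [Ha [Hb ->]]]].
  replace (lam * (RtoC a * p + RtoC b * q))%C
    with (RtoC a * (lam * p) + RtoC b * (lam * q))%C by ring.
  now apply Q_subspace_comb.
Qed.

(* With [u2 = s (t + i) u1] etc., writing [u1''] and [u2''] in the bases
   [u1, u1'] and [u2, u2'] shows that [s / s'] is rational; then
   [lam = s (t + i)] sends [u1] to [u2] and [u1'] to [(s / s') u2']. *)
Lemma is_CM_of_three_angles_with_cot V w1 w2 t A A' A'' :
  is_Q_subspace V -> Q_generated w1 w2 V ->
  angle_with_cot V t A -> angle_with_cot V t A' -> angle_with_cot V t A'' ->
  fst A <> fst A' -> fst A <> fst A'' -> fst A' <> fst A'' -> is_CM V.
Proof.
intros HQ Hgen [u1 [u2 [s [V1 [V2 [H1 [Hs [E2 EA]]]]]]]]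
  [u1' [u2' [s' [V1' [V2' [H1' [Hs' [E2' EA']]]]]]]]
  [u1'' [u2'' [s'' [V1'' [V2'' [H1'' [Hs'' [E2'' EA'']]]]]]]] N1 N2 N3.
subst A A' A''; simpl in N1, N2, N3.
assert (C1 : cross u1 u1' <> 0)
  by (intro Z; apply N1; symmetry; apply line_eq_of_cross0; auto).
assert (C2 : cross u1 u1'' <> 0)
  by (intro Z; apply N2; symmetry; apply line_eq_of_cross0; auto).
assert (C3 : cross u1' u1'' <> 0)
  by (intro Z; apply N3; symmetry; apply line_eq_of_cross0; auto).
assert (C4 : cross u2 u2' <> 0).
{ replace (cross u2 u2') with (s * s' * (t * t + 1) * cross u1 u1')
    by (subst u2 u2'; destruct u1, u1'; unfold cross; simpl; ring).
  assert (t * t + 1 <> 0) by nra.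
  repeat apply Rmult_integral_contrapositive_currified; auto. }
destruct (Q_generated_of_cross V w1 w2 u1 u1' Hgen V1 V1' C1 u1'' V1'')
  as [al [be [Hal [Hbe E1'']]]].
destruct (Q_generated_of_cross V w1 w2 u2 u2' Hgen V2 V2' C4 u2'' V2'')
  as [al2 [be2 [Hal2 [Hbe2 E2x]]]].
assert (Hal0 : al <> 0)
  by (intro Z; apply C3; rewrite E1'', Z; destruct u1, u1'; unfold cross; simpl; ring).
assert (Hbe0 : be <> 0)
  by (intro Z; apply C2; rewrite E1'', Z; destruct u1, u1'; unfold cross; simpl; ring).
assert (EQ : (RtoC (s / s'' * al2) * u2 + RtoC (s / s'' * be2) * u2' =
              RtoC al * u2 + RtoC (be * (s / s')) * u2')%C).
{ transitivity (RtoC (s / s'') * u2'')%C; [rewrite E2x; destruct u2, u2'; Ceq; ring|].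
  rewrite E2'', E1'', E2, E2'. destruct u1, u1'; Ceq; field; auto. }
destruct (coords_unique u2 u2' _ _ _ _ C4 EQ) as [EX EY].
assert (Hal20 : al2 <> 0) by (intro Z; rewrite Z, Rmult_0_r in EX; auto).
assert (Rss' : is_rat (s / s')).
{ assert (Ebe2 : be2 = be * (s / s') * s'' / s) by (rewrite <- EY; field; auto).
  replace (s / s') with (al / al2 * be2 / be)
    by (rewrite <- EX, Ebe2; field; auto).
  apply is_rat_div; [apply is_rat_mult; [apply is_rat_div|]|]; auto. }
apply (is_CM_of_generators V u1 u1' (RtoC s * (t, 1))%C HQ
  (Q_generated_of_cross V w1 w2 u1 u1' Hgen V1 V1' C1)).
- replace (RtoC s * (t, 1) * u1)%C with u2 by (rewrite E2; destruct u1; Ceq; ring). exact V2.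
- replace (RtoC s * (t, 1) * u1')%C with (RtoC (s / s') * u2' + RtoC 0 * u2')%C.
  + apply Q_subspace_comb; auto using is_rat_0.
  + rewrite E2'; destruct u1'; Ceq; field; auto.
- simpl; intro Z; apply Hs; lra.
Qed.

Lemma angles_with_cot_finite V w1 w2 t :
  is_Q_subspace V -> Q_generated w1 w2 V -> ~ is_CM V ->
  finitely_many (angle_with_cot V t).
Proof.
intros HQ Hgen HCM. apply finitely_many_of_no_three. intros x y z Hx Hy Hz.
destruct (classic (fst x = fst y)) as [E1|E1];
  [left; now apply (angle_with_cot_fst_inj V t)|].
destruct (classic (fst x = fst z)) as [E2|E2];
  [right; left; now apply (angle_with_cot_fst_inj V t)|].
destruct (classic (fst y = fst z)) as [E3|E3];
  [right; right; now apply (angle_with_cot_fst_inj V t)|].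
exfalso; apply HCM, (is_CM_of_three_angles_with_cot V w1 w2 t x y z); auto.
Qed.

(** * Cotangents of rational multiples of pi *)

Lemma INR_neq0 n : (0 < n)%nat -> INR n <> 0.
Proof. intros H; apply not_0_INR; lia. Qed.

Lemma rat_frac_mod2 (q : R) (z : Z) (d m : nat) : (0 < d)%nat -> (0 < m)%nat ->
  q * INR d = IZR z ->
  exists (k : nat) (b : Z), INR k * (2 / INR (d * m)) = 2 * q + 2 * IZR b.
Proof.
intros Hd Hm Hq.
set (a := (z * Z.of_nat m)%Z).
exists (Z.to_nat (a + Z.of_nat (d * m) * Z.abs a)), (Z.abs a).
assert (Hnn : (0 <= a + Z.of_nat (d * m) * Z.abs a)%Z).
{ assert (1 <= Z.of_nat (d * m))%Z by (rewrite Nat2Z.inj_mul; nia). nia. }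
rewrite INR_IZR_INZ, Z2Nat.id by exact Hnn.
rewrite plus_IZR, mult_IZR, <- INR_IZR_INZ.
unfold a; rewrite mult_IZR, <- INR_IZR_INZ, <- Hq, mult_INR.
field. split; apply INR_neq0; auto.
Qed.

Lemma INR_mul_frac k d N : (0 < d)%nat -> (0 < N)%nat ->
  INR (k * d) * (2 / INR (d * N)) = INR k * (2 / INR N).
Proof. intros Hd HN. rewrite !mult_INR. field. split; apply INR_neq0; auto. Qed.

Lemma INR_frac_full N : (0 < N)%nat -> INR N * (2 / INR N) = 2.
Proof. intros HN. field. apply INR_neq0; auto. Qed.

Local Close Scope R_scope. Local Close Scope Q_scope. Local Close Scope C_scope.

From HB Require Import structures.
From mathcomp Require Import all_boot all_order all_algebra all_field.
From mathcomp Require Import complex Rstruct ssrZ zify ring.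
Import Order.TTheory GRing.Theory Num.Theory.

Set Implicit Arguments. Unset Strict Implicit. Unset Printing Implicit Defensive.

(* Only the primes [p <= 2 N + 1] can divide [m], each with [p ^ logn p m <= 2 N],
   since [totient (p ^ (e + 1)) = p ^ e * (p - 1) <= N]. *)
Lemma dvdn_fact_of_totient_le m N :
  (0 < m)%N -> (totient m <= N)%N -> (m %| (2 * N)`!)%N.
Proof.
move=> m0 hN; apply/(dvdn_partP _ m0) => p pin.
have pr : prime p by move: pin; rewrite mem_primes => /andP[].
have e0 : 0 < logn p m by rewrite logn_gt0.
rewrite p_part; apply: dvdn_fact; rewrite expn_gt0 prime_gt0 //=.
have hm : totient (p ^ logn p m) <= N.
  apply: leq_trans hN.
  rewrite -{2}(partnC p m0) totient_coprime ?coprime_partC // p_part.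
  by rewrite leq_pmulr // totient_gt0 part_gt0.
rewrite totient_pfactor // in hm.
have p2 := prime_gt1 pr.
move: hm; case: (logn p m) e0 => // e _ /=; rewrite expnS.
move: (p ^ e) (expn_gt0 p e) => k k0; nia.
Qed.

Local Open Scope ring_scope.

Lemma polys_linear_dependent (F : fieldType) N (ps : 'I_N.+1 -> {poly F}) :
  (forall k, size (ps k) <= N)%N ->
  exists2 c : 'rV[F]_N.+1, c != 0 & \sum_k c 0 k *: ps k = 0.
Proof.
move=> sps; pose M : 'M[F]_(N.+1, N) := \matrix_k poly_rV (ps k).
have K0 : kermx M != 0.
  by rewrite -mxrank_eq0 mxrank_ker; have := rank_leq_col M; lia.
have [i hi] : exists i, row i (kermx M) != 0.
  apply/existsP; apply: contraR K0 => /existsPn h.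
  by apply/eqP/row_matrixP => i; rewrite row0; apply/eqP; move: (h i); rewrite negbK.
exists (row i (kermx M)) => //.
transitivity (rVpoly (row i (kermx M) *m M)); last first.
  by rewrite -row_mul mulmx_ker row0 linear0.
rewrite mulmx_sum_row raddf_sum; apply: eq_bigr => k _.
by rewrite [RHS]linearZ /= rowK poly_rV_K.
Qed.

Section NumField.

Variable F : numFieldType.

Lemma root_Cyclotomic (z : F) m :
  m.-primitive_root z -> root (map_poly (intr : int -> F) 'Phi_m) z.
Proof.
move=> pz; have m0 := prim_order_gt0 pz.
have prodPhi d : (0 < d)%N ->
    \prod_(e <- divisors d) map_poly (intr : int -> F) 'Phi_e = 'X^d - 1.
  by move=> d0; rewrite -rmorph_prod prod_Cyclotomic // rmorphB /= rmorph1 map_polyXn.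
have : ~~ all (fun p => ~~ root p z) [seq map_poly (intr : int -> F) 'Phi_d | d <- divisors m].
  by rewrite -root_bigmul big_map negbK prodPhi // /root !hornerE prim_expr_order // subrr.
case/allPn => p /mapP[d dd ->]; rewrite negbK => rd.
have dm : (d %| m)%N by rewrite dvdn_divisors.
have d0 : (0 < d)%N by apply: dvdn_gt0 dm.
have zd : z ^+ d = 1.
  have : root (\prod_(e <- divisors d) map_poly (intr : int -> F) 'Phi_e) z.
    by rewrite (big_rem d) ?rootM ?rd // -dvdn_divisors.
  by rewrite prodPhi // /root !hornerE subr_eq0 => /eqP.
have md : (m %| d)%N by rewrite (prim_order_dvd pz) zd.
by have -> : m = d by apply/eqP; rewrite eqn_dvd md dm.
Qed.

(* The gcd with ['Phi_m] still vanishes at [z], so it is nonconstant and shares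
   with ['Phi_m] a complex root; its minimal polynomial is ['Phi_m] itself. *)
Lemma totient_lt_size_root (z : F) m (P : {poly rat}) :
  m.-primitive_root z -> P != 0 -> root (map_poly ratr P) z ->
  (totient m < size P)%N.
Proof.
move=> pz P0 rP; have m0 := prim_order_gt0 pz.
pose Phi : {poly rat} := map_poly intr 'Phi_m.
have hPhi (K : numFieldType) : map_poly (ratr : rat -> K) Phi = map_poly intr 'Phi_m.
  by rewrite /Phi -map_poly_comp; apply: eq_map_poly => a /=; rewrite ratr_int.
pose g := gcdp P Phi.
have rg : root (map_poly (ratr : rat -> F) g) z.
  by rewrite /g gcdp_map root_gcd rP hPhi root_Cyclotomic.
have sg : size g != 1%N.
  apply/negP => /eqP sg1; have gE := size1_polyC (eq_leq sg1).
  have g0 : g`_0 != 0 by apply/eqP => e; move: sg1; rewrite gE e size_polyC eqxx.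
  by move: rg; rewrite gE map_polyC /root hornerC fmorph_eq0 (negbTE g0).
have sgC : size (map_poly (ratr : rat -> algC) g) != 1%N by rewrite size_map_poly.
have [x rx] := closed_rootP _ sgC.
have px : m.-primitive_root x.
  have [z0 pz0] := C_prim_root_exists m0.
  rewrite -(root_cyclotomic pz0) -(Cintr_Cyclotomic pz0) -hPhi.
  by apply: root_dvdp rx; rewrite dvdp_map dvdp_gcdr.
have [p [Dp _] dvp] := minCpolyP x.
have pP : p %| P by apply: dvdp_trans (dvdp_gcdl P Phi); rewrite -dvp.
have := dvdp_leq P0 pP.
by rewrite -(size_map_poly (ratr : rat -> algC)) -Dp (minCpoly_cyclotomic px) size_cyclotomic.
Qed.

Definition Qpoly_val (eta x : F) : Prop :=
  exists p : {poly rat}, x = (map_poly ratr p).[eta].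

Lemma Qpoly_valD eta x y : Qpoly_val eta x -> Qpoly_val eta y -> Qpoly_val eta (x + y).
Proof. by move=> [p ->] [q ->]; exists (p + q); rewrite rmorphD hornerD. Qed.

Lemma Qpoly_valB eta x y : Qpoly_val eta x -> Qpoly_val eta y -> Qpoly_val eta (x - y).
Proof. by move=> [p ->] [q ->]; exists (p - q); rewrite rmorphB hornerD hornerN. Qed.

Lemma Qpoly_valM eta x y : Qpoly_val eta x -> Qpoly_val eta y -> Qpoly_val eta (x * y).
Proof. by move=> [p ->] [q ->]; exists (p * q); rewrite rmorphM hornerM. Qed.

Lemma Qpoly_val_rat eta r : Qpoly_val eta (ratr r).
Proof. by exists r%:P; rewrite map_polyC hornerC. Qed.

Lemma Qpoly_valX eta k : Qpoly_val eta (eta ^+ k).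
Proof. by exists 'X^k; rewrite map_polyXn hornerXn. Qed.

Lemma Qpoly_val1 eta : Qpoly_val eta 1.
Proof. by have := Qpoly_val_rat eta 1; rewrite rmorph1. Qed.

Lemma Qpoly_val0 eta : Qpoly_val eta 0.
Proof. by have := Qpoly_val_rat eta 0; rewrite rmorph0. Qed.

(* [zeta] lies in [Q(eta)], of degree at most [N]: the [N + 1] powers [zeta ^+ k]
   are [Q]-dependent; clearing the denominator [A ^+ N], the dependence is read
   off among the [N + 1] polynomials [B ^ k A ^ (N - k)] reduced mod ['X^N - 1]. *)
Lemma Qpoly_val_quotient_algebraic (eta zeta A B : F) N :
  (0 < N)%N -> eta ^+ N = 1 -> Qpoly_val eta A -> Qpoly_val eta B ->
  A != 0 -> zeta * A = B ->
  exists2 P : {poly rat}, P != 0 & (size P <= N.+1)%N /\ root (map_poly ratr P) zeta.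
Proof.
move=> N0 eN [pa ->] [pb ->] A0 hz.
pose ev (p : {poly rat}) := (map_poly (ratr : rat -> F) p).[eta].
have evM p q : ev (p * q) = ev p * ev q by rewrite /ev rmorphM /= hornerM.
have evX p k : ev (p ^+ k) = ev p ^+ k by rewrite /ev rmorphXn /= horner_exp.
pose d : {poly rat} := 'X^N - 1%:P.
have d0 : d != 0 by rewrite -size_poly_eq0 size_XnsubC.
have evmod p : ev (p %% d) = ev p.
  have evd : ev d = 0.
    by rewrite /ev /d rmorphB /= map_polyXn map_polyC /= rmorph1 !hornerE eN subrr.
  by rewrite {2}(divp_eq p d) /ev rmorphD /= hornerD -!/(ev _) evM evd mulr0 add0r.
pose r (k : 'I_N.+1) := (pb ^+ k * pa ^+ (N - k)) %% d.
have sr k : (size (r k) <= N)%N.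
  by have := ltn_modpN0 (pb ^+ k * pa ^+ (N - k)) d0; rewrite size_XnsubC.
have [c c0 hc] := polys_linear_dependent sr.
pose P : {poly rat} := \poly_(k < N.+1) c 0 (inord k).
exists P.
  apply: contraNneq c0 => P0; apply/eqP/rowP => k.
  rewrite mxE; have := congr1 (fun p : {poly rat} => p`_k) P0.
  by rewrite coef_poly ltn_ord coef0 inord_val.
split; first exact: size_poly.
have sP : (size (map_poly (ratr : rat -> F) P) <= N.+1)%N.
  by rewrite size_map_poly size_poly.
rewrite /root (horner_coef_wide _ sP).
have AN0 : ev pa ^+ N != 0 by rewrite expf_neq0.
apply/eqP; apply: (mulIf AN0); rewrite mul0r mulr_suml.
transitivity (ev (\sum_k c 0 k *: r k)); last by rewrite hc /ev rmorph0 horner0.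
rewrite /ev rmorph_sum horner_sum; apply: eq_bigr => k _ /=.
rewrite map_polyZ hornerZ -/(ev (r k)) /r evmod evM !evX coef_map /= coef_poly ltn_ord inord_val.
rewrite -mulrA; congr (_ * _).
have kN : (k <= N)%N by rewrite -ltnS ltn_ord.
rewrite -/(ev pa) (_ : ev pa ^+ N = ev pa ^+ k * ev pa ^+ (N - k)).
  by rewrite mulrA -exprMn /ev hz.
by rewrite -exprD subnKC.
Qed.

Lemma Qpoly_val_unity_root_fact (eta z A B : F) N d :
  (0 < N)%N -> eta ^+ N = 1 -> Qpoly_val eta A -> Qpoly_val eta B ->
  A != 0 -> z * A = B -> (0 < d)%N -> z ^+ d = 1 -> z ^+ (2 * N)`! = 1.
Proof.
move=> N0 eN hA hB A0 hz d0 zd.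
have [P P0 [sP rP]] := Qpoly_val_quotient_algebraic N0 eN hA hB A0 hz.
have [m pm _] := prim_order_exists d0 zd.
have tmN : (totient m <= N)%N.
  by rewrite -ltnS; apply: leq_trans sP; apply: totient_lt_size_root pm P0 rP.
apply/eqP; rewrite -(prim_order_dvd pm).
exact: dvdn_fact_of_totient_le (prim_order_gt0 pm) tmN.
Qed.

End NumField.

Section ComplexRoots.

Notation CR := (complex R).

Ltac R_ring := rewrite ?RealsE ?[nat_of_pos _]/=; ring.

Definition cispi (x : R) : CR := Complex (cos (x * PI)) (sin (x * PI)).

Lemma cispiD x y : cispi x * cispi y = cispi (x + y).
Proof.
rewrite /cispi !RealsE mulrDl cosD sinD.
by apply/eqP; rewrite eq_complex /=; apply/andP; split; apply/eqP; R_ring.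
Qed.

Lemma cispi0 : cispi 0 = 1.
Proof. by rewrite /cispi Rmult_0_l cos_0 sin_0. Qed.

Lemma cispi2 : cispi 2 = 1.
Proof. by rewrite /cispi cos_2PI sin_2PI. Qed.

Lemma cispiX x n : cispi x ^+ n = cispi (INR n * x).
Proof.
elim: n => [|n IH]; first by rewrite expr0 Rmult_0_l cispi0.
by rewrite exprS IH cispiD S_INR; congr cispi; R_ring.
Qed.

Lemma cispi_even (z : Z) : cispi (2 * IZR z) = 1.
Proof.
have hp p : cispi (2 * IZR (Zpos p)) = 1.
  by rewrite -(positive_nat_Z p) -INR_IZR_INZ Rmult_comm -cispiX cispi2 expr1n.
case: z => [|p|p]; [by rewrite Rmult_0_r cispi0 | exact: hp |].
have : cispi (2 * IZR (Zneg p)) * cispi (2 * IZR (Zpos p)) = 1.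
  by rewrite cispiD -cispi0; congr cispi; rewrite [IZR (Zneg p)]/IZR [IZR (Zpos p)]/IZR; R_ring.
by rewrite hp mulr1.
Qed.

(* [cispi (2 q) = (cos + i sin)^2] and [cos = t sin], [sin^2 (1 + t^2) = 1]. *)
Lemma cispi2_cot t q : t * sin (q * PI) = cos (q * PI) ->
  Complex t 0 * (cispi (2 * q) - 1) = 'i%C * (cispi (2 * q) + 1).
Proof.
move=> h.
have e2 : cispi (2 * q) = cispi q * cispi q by rewrite cispiD; congr cispi; R_ring.
have h1 : sin (q * PI) ^+ 2 + cos (q * PI) ^+ 2 = 1.
  by have := sin2_cos2 (q * PI); rewrite /Rsqr !RealsE !expr2.
rewrite e2 /cispi; move: h h1; set s := sin _; set c := cos _ => h h1.
rewrite -h in h1 *.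
apply/eqP; rewrite eq_complex /=; apply/andP; split; rewrite -subr_eq0; apply/eqP.
  transitivity (t * (s ^+ 2 + (t * s) ^+ 2 - 1)); first ring.
  by rewrite h1 subrr mulr0.
transitivity (s ^+ 2 + (t * s) ^+ 2 - 1); first ring.
by rewrite h1 subrr.
Qed.

Lemma IZR_int_of_Z z : IZR z = (int_of_Z z)%:~R.
Proof.
case: z => [|p|p] //=; first by rewrite IZRposE INRE Pos_to_natE.
rewrite NegzE prednK; last exact/ssrnat.ltP/Pos2Nat.is_pos.
by rewrite (_ : IZR (Zneg p) = - IZR (Zpos p)) // IZRposE INRE Pos_to_natE mulrNz.
Qed.

Lemma is_rat_ratr x : is_rat x -> exists r : rat, x = ratr r.
Proof.
case=> q ->; exists ((int_of_Z (Qnum q))%:~R / (int_of_Z (Zpos (Qden q)))%:~R).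
by rewrite /Q2R RmultE RinvE !IZR_int_of_Z rmorphM /= fmorphV /= !ratr_int.
Qed.

Lemma is_rat_frac x : is_rat x ->
  exists (z : Z) (d : nat), (0 < d)%N /\ x * INR d = IZR z.
Proof.
case=> q ->; exists (Qnum q), (Pos.to_nat (Qden q)); split.
  exact/ssrnat.ltP/Pos2Nat.is_pos.
rewrite /Q2R INR_IZR_INZ positive_nat_Z RmultE RinvE -mulrA mulVf ?mulr1 //.
exact/eqP/not_0_IZR.
Qed.

Lemma cispi_rat_unity x : is_rat x -> exists2 d : nat, (0 < d)%N & cispi (2 * x) ^+ d = 1.
Proof.
case/is_rat_frac => z [d [d0 h]]; exists d => //.
rewrite cispiX -(cispi_even z); congr cispi; rewrite -h; R_ring.
Qed.

Definition cispi_root (N : nat) : CR := cispi (2 / INR N).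

Lemma cispi_root_expN N : (0 < N)%N -> cispi_root N ^+ N = 1.
Proof. by move=> N0; rewrite /cispi_root cispiX INR_frac_full ?cispi2 //; apply/ssrnat.ltP. Qed.

Lemma rat_cots_common_cispi_root (L : list R) : (forall t, In t L -> rat_cot t) ->
  exists2 N, (0 < N)%N & forall t, In t L ->
    exists k, Complex t 0 * (cispi_root N ^+ k - 1) = 'i%C * (cispi_root N ^+ k + 1).
Proof.
elim: L => [|t L IH] H; first by exists 1%N => // t [].
have [N0 N00 HN0] := IH (fun x hx => H x (or_intror hx)).
have [q [qr hq]] := H t (or_introl erefl).
have [z [d [d0 hd]]] := is_rat_frac qr.
have d0' : (0 < d)%coq_nat by apply/ssrnat.ltP.
have N00' : (0 < N0)%coq_nat by apply/ssrnat.ltP.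
exists (Nat.mul d N0); first by rewrite -/(muln d N0) muln_gt0 d0 N00.
move=> x [<-|hx].
  have [k [b hk]] := rat_frac_mod2 q z d N0 d0' N00' hd.
  exists k; rewrite /cispi_root cispiX hk -cispiD cispi_even mulr1.
  exact: cispi2_cot.
have [k hk] := HN0 x hx.
exists (Nat.mul k d).
by rewrite /cispi_root cispiX INR_mul_frac // -cispiX.
Qed.

Lemma qspan_cot_quotient N L :
  (forall t, In t L ->
    exists k, Complex t 0 * (cispi_root N ^+ k - 1) = 'i%C * (cispi_root N ^+ k + 1)) ->
  forall t, qspan L t -> exists G P, Qpoly_val (cispi_root N) G /\
    Qpoly_val (cispi_root N) P /\ P != 0 /\ Complex t 0 * P = 'i%C * G.
Proof.
move=> HL t ht; set eta := cispi_root N; apply: (ht (fun t : R => _)); last first.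
  move=> x /HL [k hk]; exists (eta ^+ k + 1), (eta ^+ k - 1).
  split; first by apply: Qpoly_valD; [apply: Qpoly_valX | apply: Qpoly_val1].
  split; first by apply: Qpoly_valB; [apply: Qpoly_valX | apply: Qpoly_val1].
  split => //; apply/eqP => e; move: hk.
  have -> : eta ^+ k = 1 by apply/eqP; rewrite -subr_eq0 e.
  rewrite subrr mulr0 => /esym/eqP; rewrite mulf_eq0 (negbTE (neq0Ci _)) /=.
  by rewrite -mulr2n pnatr_eq0.
split; last split.
- exists 0, 1; split; first exact: Qpoly_val0.
  split; first exact: Qpoly_val1.
  by split; [exact: oner_neq0 | rewrite mulr1 mulr0 R0E].
- move=> x y [G1 [P1 [g1 [p1 [n1 e1]]]]] [G2 [P2 [g2 [p2 [n2 e2]]]]].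
  exists (G1 * P2 + G2 * P1), (P1 * P2).
  split; first by apply: Qpoly_valD; apply: Qpoly_valM.
  split; first exact: Qpoly_valM.
  split; first by rewrite mulf_neq0.
  have -> : Complex (x + y)%R 0 = Complex x 0 + Complex y 0.
    by apply/eqP; rewrite eq_complex /= addr0 !eqxx.
  by rewrite mulrDl mulrA e1 (mulrC P1) mulrA e2 mulrDr !mulrA.
- move=> a x /is_rat_ratr [r ->] [G [P [g [p [n e]]]]].
  exists (ratr r * G), P.
  split; first by apply: Qpoly_valM => //; apply: Qpoly_val_rat.
  split => //; split => //.
  have -> : Complex (ratr r * x)%R 0 = ratr r * Complex x 0.
    rewrite -(fmorph_rat (real_complex R)).
    by apply/eqP; rewrite eq_complex /=; apply/andP; split; apply/eqP; ring.
  by rewrite -mulrA e mulrCA.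
Qed.

Lemma cot_quotient_solve (t : R) (z G P : CR) :
  Complex t 0 * (z - 1) = 'i%C * (z + 1) -> Complex t 0 * P = 'i%C * G -> P != 0 ->
  z - 1 != 0 /\ G - P != 0 /\ z * (G - P) = G + P.
Proof.
move=> rel eGP P0.
have i0 : 'i%C != 0 :> CR by exact: neq0Ci.
have two0 : (1 + 1 : CR) != 0 by rewrite -mulr2n pnatr_eq0.
have z1 : z - 1 != 0.
  apply/negP; rewrite subr_eq0 => /eqP z1; move: rel; rewrite z1 subrr mulr0.
  by move/esym/eqP; rewrite mulf_eq0 (negbTE i0) (negbTE two0).
have h : G * (z - 1) = P * (z + 1).
  by apply: (mulfI i0); rewrite mulrA -eGP mulrAC rel; ring.
have key : z * (G - P) = G + P.
  by apply/eqP; rewrite -subr_eq0; apply/eqP; transitivity (G * (z - 1) - P * (z + 1));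
    [ring | rewrite h subrr].
split => //; split => //.
apply/negP; rewrite subr_eq0 => /eqP GP; move: key; rewrite GP subrr mulr0.
move/esym/eqP; rewrite -mulr2n -mulr_natl mulf_eq0 pnatr_eq0 /=.
by rewrite (negbTE P0).
Qed.

Lemma In_mem (T : eqType) (x : T) (s : seq T) : x \in s -> In x s.
Proof. by elim: s => //= y s IH; rewrite in_cons => /orP [/eqP ->|/IH]; auto. Qed.

(* Every such cotangent is [cot (q PI)] with [cispi (2 q)] a [(2 N)!]-th root of unity. *)
Lemma rat_cots_in_qspan_of_rat_cots_finite (L : list R) :
  (forall t, In t L -> rat_cot t) -> finitely_many (fun t => qspan L t /\ rat_cot t).
Proof.
move=> HL; have [N N0 HN] := rat_cots_common_cispi_root HL.
have [rs Hrs] := closed_field_poly_normal ('X^((2 * N)`!) - 1 : {poly CR}).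
exists (map (fun z : CR => complex.Re ('i%C * (z + 1) / (z - 1))) rs).
move=> t [ht [q [qr hq]]].
have [d d0 hd] := cispi_rat_unity qr.
have rel := cispi2_cot hq; move: rel hd; set z := cispi (2 * q) => rel hd.
have [G [P [QG [QP [P0 eGP]]]]] := qspan_cot_quotient HN ht.
have [z1 [GP0 key]] := cot_quotient_solve rel eGP P0.
have zM := Qpoly_val_unity_root_fact N0 (cispi_root_expN N0)
  (Qpoly_valB QG QP) (Qpoly_valD QG QP) GP0 key d0 hd.
have zin : z \in rs.
  have : root ('X^((2 * N)`!) - 1) z by rewrite /root !hornerE zM subrr.
  rewrite Hrs rootZ ?root_prod_XsubC //.
  by rewrite lead_coef_eq0 -size_poly_eq0 size_XnsubC ?fact_gt0.
apply: In_mem.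
have -> : t = complex.Re ('i%C * (z + 1) / (z - 1)) by rewrite -rel mulfK.
exact: map_f.
Qed.

End ComplexRoots.

Lemma rat_cots_in_qspan_finite (h : list R) : finitely_many (fun t => qspan h t /\ rat_cot t).
Proof.
have [L [HL1 HL2]] :=
  qspan_spanned_by_members h (fun t => qspan h t /\ rat_cot t) (fun t ht => proj1 ht).
have [l Hl] := rat_cots_in_qspan_of_rat_cots_finite (fun t ht => proj2 (HL1 t ht)).
by exists l => t [ht hq]; apply: Hl; split => //; apply: HL2.
Qed.

Theorem theorem4p3 (V : C -> Prop) :
  is_space V -> ~ is_CM V -> finitely_many (rational_angle V).
Proof.
move=> [HQ [[w1 [w2 [_ [_ [_ Hgen]]]]] _]] HCM.
have [ts Hts] := rat_cots_in_qspan_finite (gram w1 w2).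
apply: (finitely_many_sub _ (fun A => exists t, In t ts /\ angle_with_cot V t A)).
  move=> A /(rational_angle_with_cot V w1 w2 A Hgen) [t [Ht [Hcot HAt]]].
  by exists t; split => //; apply: Hts.
apply: finitely_many_union => t _.
exact: (angles_with_cot_finite V w1 w2 t HQ Hgen HCM).
Qed.
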